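(* Let $G$ be a graph with no isolated vertices. Then $b_{tR}(G)=1$ if and only if $G$ has an edge $uv$ such that $G-uv$ has no isolated vertices and every $\gamma_{tR}(G)$-function $f=(V_0,V_1,V_2)$ satisfies (i) $G[V_1\cup V_2]-uv$ has an isolated vertex, or (ii) $u\in V_2$ and $v\in \mathrm{epn}(u,V_2)\cap V_0$, or $v\in V_2$ and $u\in\mathrm{epn}(v,V_2)\cap V_0$.
   Context: A TRDF on $G=(V,E)$ is a function $f:V\to\{0,1,2\}$ such that every $v$ with $f(v)=0$ has a neighbor $u$ with $f(u)=2$ and the subgraph induced by $\{v:f(v)>0\}$ has no isolated vertices; $\gamma_{tR}(G)$ is its minimum weight and a $\gamma_{tR}(G)$-function is a TRDF of that weight. A function $f$ is identified with the partition $(V_0,V_1,V_2)$ where $V_i=\{v:f(v)=i\}$. $b_{tR}(G)$ is the minimum $|E'|$ such that $G-E'$ has no isolated vertices and $\gamma_{tR}(G-E')>\gamma_{tR}(G)$ ($\infty$ if none). For $S\subseteq V$ and $v\in S$, $\mathrm{epn}(v,S)=\{w\in V\setminus S: N(w)\cap S=\{v\}\}$. $G[X]$ is the induced subgraph. *)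

From mathcomp Require Import all_boot.
Set Implicit Arguments. Unset Strict Implicit. Unset Printing Implicit Defensive.

Section Defs.
Variable T : finType.

Definition simple_graph (g : rel T) : Prop := symmetric g /\ irreflexive g.

Definition isolated (g : rel T) (v : T) : bool := [forall u, ~~ g v u].
Definition no_isolated (g : rel T) : bool := [forall v, ~~ isolated g v].

Definition edges (g : rel T) : {set {set T}} :=
  [set [set p.1; p.2] | p in [set p : T * T | g p.1 p.2]].

Definition del_edges (g : rel T) (E' : {set {set T}}) : rel T :=
  fun x y => g x y && ([set x; y] \notin E').

Definition del_edge (g : rel T) (u v : T) : rel T := del_edges g [set [set u; v]].

Definition Vi (f : {ffun T -> 'I_3}) (i : nat) : {set T} := [set x | f x == i :> nat].

Definition weight (f : {ffun T -> 'I_3}) : nat := \sum_(v : T) (f v : nat).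

Definition isTRDF (g : rel T) (f : {ffun T -> 'I_3}) : bool :=
  [forall v, (f v == 0 :> nat) ==> [exists u, g v u && (f u == 2 :> nat)]] &&
  [forall v, (0 < f v) ==> [exists u, g v u && (0 < f u)]].

(* gamma_tR(G): minimum weight of a TRDF (when none exists, the default
   2 * #|T| is returned; this case never arises for graphs without isolated
   vertices, where the constant-2 function is a TRDF). *)
Definition gamma_tR (g : rel T) : nat :=
  \big[minn/(2 * #|T|)%N]_(f : {ffun T -> 'I_3} | isTRDF g f) weight f.

Definition gamma_tR_function (g : rel T) (f : {ffun T -> 'I_3}) : bool :=
  isTRDF g f && (weight f == gamma_tR g).

Definition bondage_set (g : rel T) (E' : {set {set T}}) : bool :=
  [&& E' \subset edges g, no_isolated (del_edges g E') &
      gamma_tR g < gamma_tR (del_edges g E')].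

(* b_tR(G) : None encodes infinity *)
Definition b_tR (g : rel T) : option nat :=
  if [exists E', bondage_set g E'] then
    Some (\big[minn/#|{set {set T}}|]_(E' | bondage_set g E') #|E'|)
  else None.

Definition epn (g : rel T) (v : T) (S : {set T}) : {set T} :=
  [set w | (w \notin S) && ([set x | g w x] :&: S == [set v])].

End Defs.

(* Deleting an edge uv can only raise gamma_tR, and it raises it strictly
   iff no gamma_tR(G)-function f is still a TRDF of G - uv: a survivor would
   witness gamma_tR(G - uv) <= gamma_tR(G), while a minimum TRDF of G - uv is a
   TRDF of G.  A TRDF f of G stops being one of G - uv exactly when uv was the
   only edge keeping some vertex of G[V1 u V2] non-isolated (condition (i)), or
   the only edge joining some vertex of V0 to V2; the latter means one end
   of uv is in V2 and the other is its external private neighbour in V0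
   (condition (ii)). *)

From mathcomp Require Import all_boot all_order.
Set Implicit Arguments. Unset Strict Implicit.

Section BigMinNat.
Variables (I : finType) (P : pred I) (F : I -> nat) (d : nat).

Lemma bigminn_le_cond j : P j -> \big[minn/d]_(i | P i) F i <= F j.
Proof.
rewrite -Order.NatOrder.minEnat -Order.NatOrder.leEnat.
exact: Order.TotalTheory.bigmin_le_cond.
Qed.

Lemma bigminn_geP m :
  reflect (m <= d /\ forall i, P i -> m <= F i) (m <= \big[minn/d]_(i | P i) F i).
Proof.
rewrite -Order.NatOrder.minEnat -Order.NatOrder.leEnat.
exact: Order.TotalTheory.bigmin_geP.
Qed.

Lemma bigminn_le_id : \big[minn/d]_(i | P i) F i <= d.
Proof.
rewrite -Order.NatOrder.minEnat -Order.NatOrder.leEnat.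
exact: Order.TotalTheory.bigmin_le_id.
Qed.

Lemma eq_bigminn j : P j -> (forall i, P i -> F i <= d) ->
  exists2 i0, P i0 & \big[minn/d]_(i | P i) F i = F i0.
Proof.
rewrite -Order.NatOrder.minEnat => Pj leFd.
by have [i0 Pi0 ->] := @Order.TotalTheory.eq_bigmin _ nat _ d j P F Pj leFd; exists i0.
Qed.

End BigMinNat.

Section TotalRomanDomination.
Variable T : finType.
Implicit Types (g h : rel T) (f : {ffun T -> 'I_3}).

Lemma weight_le f : weight f <= 2 * #|T|.
Proof.
rewrite /weight mulnC -sum_nat_const; apply: leq_sum => v _.
by rewrite -ltnS ltn_ord.
Qed.

Lemma gamma_tR_le g f : isTRDF g f -> gamma_tR g <= weight f.
Proof. exact: bigminn_le_cond. Qed.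

Lemma gamma_tR_attained g f0 : isTRDF g f0 -> exists f, gamma_tR_function g f.
Proof.
move=> TRf0; have [f TRf gammaE] := eq_bigminn TRf0 (fun f _ => weight_le f).
by exists f; rewrite /gamma_tR_function TRf /gamma_tR gammaE eqxx.
Qed.

Lemma isTRDF_sub g h f : subrel h g -> isTRDF h f -> isTRDF g f.
Proof.
move=> hg /andP[/forallP dom /forallP tot]; apply/andP; split; apply/forallP => x.
  apply/implyP => /(implyP (dom x)) /existsP[y /andP[hxy fy]].
  by apply/existsP; exists y; rewrite hg.
apply/implyP => /(implyP (tot x)) /existsP[y /andP[hxy fy]].
by apply/existsP; exists y; rewrite hg.
Qed.

Lemma gamma_tR_sub g h : subrel h g -> gamma_tR g <= gamma_tR h.
Proof.
move=> hg; rewrite [X in _ <= X]/gamma_tR; apply/bigminn_geP; split.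
  exact: bigminn_le_id.
by move=> f /(isTRDF_sub hg) /gamma_tR_le.
Qed.

Lemma isTRDF_const2 h : no_isolated h -> isTRDF h [ffun=> ord_max].
Proof.
move=> /forallP noiso; apply/andP; split; apply/forallP => x; rewrite ffunE //=.
have /existsP[y] := noiso x; rewrite negbK => hxy.
by apply/existsP; exists y; rewrite hxy ffunE.
Qed.

Lemma gamma_tR_ltP g h : subrel h g -> no_isolated h ->
  gamma_tR g < gamma_tR h <-> forall f, gamma_tR_function g f -> ~~ isTRDF h f.
Proof.
move=> hg noiso; split=> [lt_gh f /andP[_ /eqP wf]|noTR].
  by apply/negP => /gamma_tR_le; rewrite wf leqNgt lt_gh.
rewrite ltn_neqAle gamma_tR_sub // andbT; apply/eqP => gammaE.
have [f /andP[TRf /eqP wf]] := gamma_tR_attained (isTRDF_const2 noiso).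
have := noTR f; rewrite TRf /gamma_tR_function (isTRDF_sub hg TRf) wf gammaE.
by rewrite eqxx => /(_ isT).
Qed.

Definition roman_dominating g f : bool :=
  [forall v, (f v == 0 :> nat) ==> [exists u, g v u && (f u == 2 :> nat)]].

Definition support_total g f : bool :=
  [forall v, (0 < f v) ==> [exists u, g v u && (0 < f u)]].

Lemma isTRDFE g f : isTRDF g f = roman_dominating g f && support_total g f.
Proof. by []. Qed.

Definition sole_dominator g f (a b : T) : Prop :=
  [/\ f a = 2 :> nat, f b = 0 :> nat & forall x, g b x -> f x = 2 :> nat -> x = a].

Lemma support_totalN h f :
  ~~ support_total h f <-> exists w, 0 < f w /\ forall x, h w x -> f x = 0 :> nat.
Proof.
split=> [/forallPn[w]|[w [fw hw0]]].
  rewrite negb_imply => /andP[fw /existsPn nbr]; exists w; split=> // x hwx.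
  by apply/eqP; move: (nbr x); rewrite hwx lt0n negbK.
apply/forallPn; exists w; rewrite fw /=; apply/existsPn => x.
by apply/negP => /andP[/hw0 ->].
Qed.

Lemma del_edgeE g u v x y : del_edge g u v x y = g x y && ([set x; y] != [set u; v]).
Proof. by rewrite /del_edge /del_edges in_set1. Qed.

Lemma del_edge_sub g u v : subrel (del_edge g u v) g.
Proof. by move=> x y /andP[]. Qed.

Lemma roman_dominating_del_edgeN g u v f : roman_dominating g f ->
  ~~ roman_dominating (del_edge g u v) f <->
  exists a b, [set a; b] = [set u; v] /\ sole_dominator g f a b.
Proof.
move=> /forallP dom; split=> [/forallPn[b]|[a [b [abE [fa fb sole]]]]].
  rewrite negb_imply => /andP[/eqP fb /existsPn undom].
  have deleted x : g b x -> f x = 2 :> nat -> [set b; x] = [set u; v].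
    move=> gbx fx; apply/eqP; move: (undom x).
    by rewrite del_edgeE gbx fx eqxx andbT negbK.
  have /existsP[a /andP[gba /eqP fa]] := implyP (dom b) (introT eqP fb).
  exists a, b; split; first by rewrite setUC deleted.
  split=> // x gbx fx; have := set21 x b.
  rewrite setUC deleted // -(deleted a) // => /set2P[|->] //.
  by move=> bx; move: fb; rewrite -bx fx.
apply/forallPn; exists b; rewrite fb eqxx /=; apply/existsPn => x.
rewrite del_edgeE -andbA; apply/and3P => -[gbx + /eqP fx].
by rewrite (sole x gbx fx) setUC abE eqxx.
Qed.

Lemma set2_eq_pair (a b u v : T) : [set a; b] = [set u; v] -> a != b ->
  (a = u /\ b = v) \/ (a = v /\ b = u).
Proof.
move=> abE; move: (set21 a b) (set22 a b); rewrite abE.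
by move=> /set2P[]-> /set2P[]->; rewrite ?eqxx // => _; [left | right].
Qed.

Lemma sole_dominator_epn g f u v : g v u ->
  (u \in Vi f 2 /\ v \in epn g u (Vi f 2) :&: Vi f 0) <-> sole_dominator g f u v.
Proof.
move=> gvu; rewrite !inE; split=> [[/eqP fu /andP[/andP[_ /eqP nbrE] /eqP fv]]|].
  by split=> // x gvx fx; apply/set1P; rewrite -nbrE !inE gvx fx.
move=> [fu fv sole]; rewrite fu fv andbT; split=> //.
apply/eqP/setP => x; rewrite !inE; apply/andP/eqP => [[gvx /eqP]|->].
  exact: sole.
by rewrite gvu fu.
Qed.

Lemma isTRDF_del_edgeN g u v f : symmetric g -> g u v -> isTRDF g f ->
  ~~ isTRDF (del_edge g u v) f <->
  (exists w, 0 < f w /\ forall x, del_edge g u v w x -> f x = 0 :> nat)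
  \/ (u \in Vi f 2 /\ v \in epn g u (Vi f 2) :&: Vi f 0)
  \/ (v \in Vi f 2 /\ u \in epn g v (Vi f 2) :&: Vi f 0).
Proof.
move=> gsym guv /andP[dom _]; have gvu : g v u by rewrite gsym.
have domN := roman_dominating_del_edgeN u v dom.
have uvE := sole_dominator_epn f gvu; have vuE := sole_dominator_epn f guv.
rewrite isTRDFE negb_and; split=> [/orP[/domN[a [b [abE sole]]]|/support_totalN]|].
- have neq_ab : a != b by case: sole => fa fb _; apply/eqP => ab; move: fa; rewrite ab fb.
  case: (set2_eq_pair abE neq_ab) => -[ea eb]; subst a b.
    by right; left; apply/uvE.
  by right; right; apply/vuE.
- by left.
case=> [/support_totalN -> | [/uvE sole | /vuE sole]]; rewrite ?orbT //; apply/orP; left.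
  by apply/domN; exists u, v.
by apply/domN; exists v, u; rewrite setUC.
Qed.

Lemma bondage_set_gt0 g E : bondage_set g E -> 0 < #|E|.
Proof.
case/and3P=> _ _; rewrite card_gt0; apply: contraTneq => ->.
by rewrite -leqNgt gamma_tR_sub // => x y gxy; rewrite /del_edges in_set0 gxy.
Qed.

Lemma card_setset_gt1 : 1 < #|{set {set T}}|.
Proof.
have ne0T : set0 != [set: {set T}] by apply/eqP/setP => /(_ set0); rewrite !inE.
by have := max_card [set set0; [set: {set T}]]; rewrite cards2 ne0T.
Qed.

(* The default value of the minimum is at least 2, so the minimum is 1
   exactly when a bondage set of size 1 exists. *)
Lemma b_tR_eq1 g : b_tR g = Some 1 <-> exists2 E, bondage_set g E & #|E| = 1.
Proof.
rewrite /b_tR; case: ifPn => [_|/existsPn noE]; last first.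
  by split=> // -[E]; rewrite (negbTE (noE E)).
split=> [[minE]|[E bE cardE]].
  have [/existsP[E /andP[bE /eqP]]|/existsPn neq1] :=
    boolP [exists E, bondage_set g E && (#|E| == 1)]; first by exists E.
  have : 2 <= \big[minn/#|{set {set T}}|]_(E | bondage_set g E) #|E|.
    apply/bigminn_geP; split=> [|E bE]; first exact: card_setset_gt1.
    by move: (neq1 E); rewrite bE ltn_neqAle eq_sym (bondage_set_gt0 bE) andbT.
  by rewrite minE.
congr Some; apply/eqP; rewrite eqn_leq; apply/andP; split.
  by rewrite -cardE bigminn_le_cond.
apply/bigminn_geP; split=> [|E' /bondage_set_gt0] //.
exact: ltnW card_setset_gt1.
Qed.

Lemma bondage_set_edgeP g :
  (exists2 E, bondage_set g E & #|E| = 1) <->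
  exists u v, [/\ g u v, no_isolated (del_edge g u v) &
                     gamma_tR g < gamma_tR (del_edge g u v)].
Proof.
split=> [[E /and3P[subE noiso lt_g] /eqP/cards1P[e eE]]|[u [v [guv noiso lt_g]]]].
  move: subE; rewrite eE sub1set => /imsetP[[x y]]; rewrite inE => /= gxy exy.
  by exists x, y; split; rewrite // /del_edge -exy -eE.
exists [set [set u; v]]; last exact: cards1.
apply/and3P; split=> //; rewrite sub1set; apply/imsetP.
by exists (u, v); rewrite ?inE.
Qed.

End TotalRomanDomination.

Unset Implicit Arguments.

Theorem mainTheorem13 (T : finType) (g : rel T) :
  simple_graph g -> no_isolated g ->
  b_tR g = Some 1 <->
  exists u v : T,
    [/\ g u v, no_isolated (del_edge g u v) &
     forall f : {ffun T -> 'I_3}, gamma_tR_function g f ->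
       (exists w, 0 < f w /\ forall x, del_edge g u v w x -> f x = 0 :> nat)
       \/ (u \in Vi f 2 /\ v \in epn g u (Vi f 2) :&: Vi f 0)
       \/ (v \in Vi f 2 /\ u \in epn g v (Vi f 2) :&: Vi f 0)].
Proof.
move=> [gsym _] _; apply: iff_trans (b_tR_eq1 g) _.
apply: iff_trans (bondage_set_edgeP g) _.
split=> -[u [v [guv noiso cond]]]; exists u, v; split=> //;
  have ltP := gamma_tR_ltP (@del_edge_sub T g u v) noiso.
  move=> f gf; apply/(isTRDF_del_edgeN gsym guv (proj1 (andP gf))).
  by move/ltP: cond; apply.
apply/ltP => f gf.
by apply/(isTRDF_del_edgeN gsym guv (proj1 (andP gf))); apply: cond.
Qed.
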